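(* If $G$ is a connected finite simple graph with $n\ge 3$ vertices, then $$1 \le \tau(G) \le \binom{n}{\lfloor n/2\rfloor},$$ and both bounds are sharp (each is attained with equality by some such graph).
   Context: A set $D \subseteq V(G)$ is a total dominating set of $G$ if every vertex of $G$ has a neighbor in $D$. $\gamma_t(G)$ is the minimum cardinality of a total dominating set; a total dominating set of that cardinality is a $\gamma_t(G)$-set, and $\tau(G)$ is the number of $\gamma_t(G)$-sets. *)

(* A finite simple graph is a symmetric irreflexive relation
   adj on a finType T (vertex set = T). *)
From mathcomp Require Import all_boot.
Set Implicit Arguments. Unset Strict Implicit. Unset Printing Implicit Defensive.

Section TotalDomination.
Variables (T : finType) (adj : rel T).

Definition simple_graph : Prop := symmetric adj /\ irreflexive adj.

Definition connected_graph : Prop := forall x y : T, connect adj x y.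

Definition total_dominating (D : {set T}) : bool :=
  [forall v, [exists u in D, adj v u]].

(* gamma_t(G): minimum cardinality of a total dominating set
   (defaults to #|T| if none exists, which never happens for the graphs
   considered: connected with at least 2 vertices). *)
Definition gamma_t : nat :=
  \big[minn/#|T|]_(D : {set T} | total_dominating D) #|D|.

Definition gamma_t_set (D : {set T}) : bool :=
  total_dominating D && (#|D| == gamma_t).

Definition tau : nat := #|[set D : {set T} | gamma_t_set D]|.

End TotalDomination.

(* The lower bound holds because a connected graph on at least two vertices
   has no isolated vertex, so its whole vertex set is a total dominating set
   and a minimum one exists. For the upper bound, the gamma_t-sets are among
   the subsets of size gamma_t, and 'C(n, k) is maximal at k = n/2. The path
   on four vertices has the unique gamma_t-set formed by its two inner
   vertices; in the triangle every pair of vertices is a gamma_t-set, giving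
   'C(3, 1) = 3 of them. *)
From mathcomp Require Import all_boot zify.
Set Implicit Arguments. Unset Strict Implicit. Unset Printing Implicit Defensive.

Lemma leq_bin_succ n m : m < n./2 -> 'C(n, m) <= 'C(n, m.+1).
Proof.
move=> lt_m_half; rewrite -(@leq_pmul2l m.+1) // mul_bin_left leq_mul2r.
by apply/orP; right; move: lt_m_half; rewrite gtn_half_double -addnn; lia.
Qed.

Lemma leq_bin_half n k : 'C(n, k) <= 'C(n, n./2).
Proof.
have bin_up : {in [pred i | i <= n./2] &, {homo binomial n : i j / i <= j}}.
  apply: homo_leq_in => [//|y x z|i j _ le_j l|i _]; rewrite ?inE.
  - exact: leq_trans.
  - by case/andP=> _ /ltnW/leq_trans->.
  - exact: leq_bin_succ.
have [le_k_half|lt_half_k] := leqP k n./2; first by rewrite bin_up ?inE.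
have [le_k_n|lt_n_k] := leqP k n; last by rewrite bin_small.
have le_nk_half : n - k <= n./2.
  by move: lt_half_k; rewrite ltn_half_double geq_half_double -!addnn; lia.
by rewrite -bin_sub // bin_up ?inE.
Qed.

Lemma geq_bigmin_seq (I : eqType) (r : seq I) (P : pred I) (F : I -> nat) a i :
  i \in r -> P i -> \big[minn/a]_(j <- r | P j) F j <= F i.
Proof.
elim: r => [//|j r IHr]; rewrite inE big_cons => /predU1P[<- -> | r_i Pi].
  exact: geq_minl.
by case: (P j); rewrite ?(leq_trans (geq_minr _ _)) ?IHr.
Qed.

Section TotalDomination.
Variables (T : finType) (adj : rel T).

Lemma gamma_t_le_card D : total_dominating adj D -> gamma_t adj <= #|D|.
Proof. by move=> tdD; rewrite geq_bigmin_seq ?mem_index_enum. Qed.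

Lemma gamma_t_setP D0 : total_dominating adj D0 -> exists D, gamma_t_set adj D.
Proof.
move=> tdD0; case: (arg_minnP (fun D : {set T} => #|D|) tdD0) => D tdD minD.
exists D; rewrite /gamma_t_set tdD eqn_leq gamma_t_le_card //=.
rewrite andbT; apply: (big_ind (fun m => #|D| <= m)).
- exact: max_card.
- by move=> x y le_x le_y; rewrite leq_min le_x le_y.
- by move=> E /minD.
Qed.

Lemma tau_gt0 D : total_dominating adj D -> 0 < tau adj.
Proof.
by move=> /gamma_t_setP[E gE]; apply/card_gt0P; exists E; rewrite inE.
Qed.

Lemma tau_le_bin_gamma_t : tau adj <= 'C(#|T|, gamma_t adj).
Proof.
rewrite -card_draws subset_leq_card //; apply/subsetP => D.
by rewrite !inE => /andP[].
Qed.

Lemma tau_eq1 S :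
    total_dominating adj S ->
    (forall D, total_dominating adj D -> S \subset D) -> tau adj = 1.
Proof.
move=> tdS least.
have gamma_S D : gamma_t_set adj D -> D = S.
  case/andP=> tdD /eqP cardD; apply/esym/eqP.
  by rewrite eqEcard least //= cardD gamma_t_le_card.
have [D gD] := gamma_t_setP tdS.
rewrite /tau (_ : [set D | gamma_t_set adj D] = [set S]) ?cards1 //.
apply/setP => E; rewrite !inE; apply/idP/eqP => [/gamma_S //|->].
by rewrite -(gamma_S D gD).
Qed.

Lemma tau_eq_bin k :
    k <= #|T| ->
    (forall D : {set T}, #|D| = k -> total_dominating adj D) ->
    (forall D : {set T}, total_dominating adj D -> k <= #|D|) ->
    tau adj = 'C(#|T|, k).
Proof.
move=> le_k_T td_k ge_k.
have /card_gt0P[S] : 0 < #|[set S : {set T} | #|S| == k]|.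
  by rewrite card_draws bin_gt0.
rewrite inE => /eqP cardS.
have gamma_k : gamma_t adj = k.
  apply/eqP; rewrite eqn_leq -{1}cardS gamma_t_le_card ?td_k //=.
  by have [D /andP[tdD /eqP <-]] := gamma_t_setP (td_k S cardS); apply: ge_k.
rewrite -card_draws /tau; apply: eq_card => D; rewrite !inE /gamma_t_set.
by rewrite gamma_k andb_idl // => /eqP /td_k.
Qed.

Lemma total_dominating_setT :
  (forall v, exists u, adj v u) -> total_dominating adj setT.
Proof.
move=> nbr; apply/forallP => v; apply/existsP.
by have [u vu] := nbr v; exists u; rewrite inE.
Qed.

Lemma connected_neighbor v :
  connected_graph adj -> 1 < #|T| -> exists u, adj v u.
Proof.
move=> conn gt1_T; have /card_gt0P[w] : 0 < #|[set~ v]| by rewrite cardsC1; lia.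
rewrite !inE => neq_wv.
case/connectP: (conn v w) => [[|u p]] /=.
  by move=> _ eq_wv; rewrite eq_wv eqxx in neq_wv.
by case/andP=> vu _ _; exists u.
Qed.

Lemma total_dominating_card_ge2 (x : T) D :
  irreflexive adj -> total_dominating adj D -> 1 < #|D|.
Proof.
move=> irr /forallP td; have /existsP[u /andP[Du _]] := td x.
have /existsP[w /andP[Dw uw]] := td u.
have neq_uw : u != w by apply: contraTneq uw => ->; rewrite irr.
have sub_uw : [set u; w] \subset D by rewrite subUset !sub1set Du Dw.
by rewrite (leq_trans _ (subset_leq_card sub_uw)) // cards2 neq_uw.
Qed.

Lemma total_dominating_unique_neighbor v u D :
  (forall w, adj v w -> w = u) -> total_dominating adj D -> u \in D.
Proof.
by move=> uniq_u /forallP/(_ v)/existsP[w /andP[Dw /uniq_u <-]].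
Qed.
End TotalDomination.

Lemma tau_bounds (T : finType) (adj : rel T) :
    simple_graph adj -> connected_graph adj -> 3 <= #|T| ->
    1 <= tau adj <= 'C(#|T|, #|T|./2).
Proof.
move=> _ conn ge3_T.
have td_T : total_dominating adj setT.
  apply: total_dominating_setT => v.
  exact: connected_neighbor conn (ltnW ge3_T).
by rewrite (tau_gt0 td_T) (leq_trans (tau_le_bin_gamma_t adj)) ?leq_bin_half.
Qed.

Definition path_graph n : rel 'I_n := fun i j => (i.+1 == j) || (j.+1 == i).
Arguments path_graph : clear implicits.

Lemma path_graph_simple n : simple_graph (path_graph n).
Proof.
by split=> [i j|i]; rewrite /path_graph; [rewrite orbC | rewrite !eqn_leq ltnn].
Qed.

Lemma path_graph_connected n : connected_graph (path_graph n.+1).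
Proof.
have from0 (i : 'I_n.+1) : connect (path_graph n.+1) ord0 i.
  case: i => k; elim: k => [|k IHk] lt_k.
    by rewrite (_ : Ordinal lt_k = ord0) ?connect0 //; apply: val_inj.
  apply: connect_trans (IHk (ltnW lt_k)) (connect1 _).
  by rewrite /path_graph /= eqxx.
move=> i j; apply: connect_trans (from0 j).
by rewrite sym_connect_sym ?from0 //; case: (path_graph_simple n.+1).
Qed.

Lemma tau_path_graph4 : tau (path_graph 4) = 1.
Proof.
apply: (@tau_eq1 _ _ [set inord 1; inord 2]).
  apply/forallP => -[[|[|[|[|k]]]] lt_k] //; apply/existsP.
  - by exists (inord 1); rewrite !inE eqxx /path_graph inordK.
  - by exists (inord 2); rewrite !inE eqxx orbT /path_graph inordK.
  - by exists (inord 1); rewrite !inE eqxx /path_graph inordK.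
  - by exists (inord 2); rewrite !inE eqxx orbT /path_graph inordK.
have nbr0 w : path_graph 4 ord0 w -> w = inord 1.
  by case/orP=> [/eqP w1|//]; apply: val_inj; rewrite /= inordK.
have nbr3 w : path_graph 4 (inord 3) w -> w = inord 2.
  rewrite /path_graph inordK // => /orP[/eqP w4|/eqP w3].
    by have := ltn_ord w; rewrite -w4.
  by apply: val_inj; rewrite /= inordK //; lia.
move=> D tdD; rewrite subUset !sub1set.
by rewrite (total_dominating_unique_neighbor nbr0 tdD)
           (total_dominating_unique_neighbor nbr3 tdD).
Qed.

Definition complete_graph (T : finType) : rel T := fun x y => x != y.
Arguments complete_graph : clear implicits.

Lemma complete_graph_simple (T : finType) : simple_graph (complete_graph T).
Proof. by split=> [x y|x]; rewrite /complete_graph ?eqxx // eq_sym. Qed.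

Lemma complete_graph_connected (T : finType) :
  connected_graph (complete_graph T).
Proof.
by move=> x y; case: (eqVneq x y) => [->|neq_xy]; [exact: connect0 | exact: connect1].
Qed.

Lemma complete_graph_total_dominating (T : finType) (D : {set T}) :
  1 < #|D| -> total_dominating (complete_graph T) D.
Proof.
move=> gt1_D; apply/forallP => v; apply/existsP.
have /card_gt0P[u] : 0 < #|D :\ v|.
  by move: gt1_D; rewrite (cardsD1 v D); case: (v \in D); lia.
by rewrite !inE => /andP[neq_uv Du]; exists u; rewrite Du /complete_graph eq_sym.
Qed.

Lemma tau_complete_graph (T : finType) :
  1 < #|T| -> tau (complete_graph T) = 'C(#|T|, 2).
Proof.
move=> gt1_T; have [x _] : exists x : T, x \in T by apply/card_gt0P; exact: ltnW.
apply: tau_eq_bin => // D.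
  by move=> cardD; apply: complete_graph_total_dominating; rewrite cardD.
exact/total_dominating_card_ge2/(proj2 (complete_graph_simple T)).
Qed.

Theorem corollary2p9 :
  (forall (T : finType) (adj : rel T),
      simple_graph adj -> connected_graph adj -> 3 <= #|T| ->
      1 <= tau adj <= 'C(#|T|, #|T|./2))
  /\ (exists (T : finType) (adj : rel T),
      [/\ simple_graph adj, connected_graph adj, 3 <= #|T| & tau adj = 1])
  /\ (exists (T : finType) (adj : rel T),
      [/\ simple_graph adj, connected_graph adj, 3 <= #|T|
        & tau adj = 'C(#|T|, #|T|./2)]).
Proof.
split; first exact: tau_bounds.
split.
  exists 'I_4, (path_graph 4); split; rewrite ?card_ord //.
  - exact: path_graph_simple.
  - exact: path_graph_connected.
  - exact: tau_path_graph4.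
exists 'I_3, (complete_graph 'I_3); split; rewrite ?card_ord //.
- exact: complete_graph_simple.
- exact: complete_graph_connected.
- by rewrite tau_complete_graph card_ord.
Qed.
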